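(* Let $\mathcal{X}$ be a set with $|\mathcal{X}|\ge2$ and $\mathcal{D}$ the class of all finite multisets with elements drawn from $\mathcal{X}$. Let $d\colon\mathcal{X}\times\mathcal{X}\to[0,1]$ be a normalized distance and, for $x\in D$, let $\mathrm{avg}(x,D)=\frac{1}{|D|}\sum_{z\in D}d(x,z)$ (sum with multiplicity). For $K\in(0,1)\cap\mathbb{Q}$, consider the deterministic suppression algorithm $\mathcal{S}_K(D)=\{x\in D\mid\mathrm{avg}(x,D)\le K\}$ (as a sub-multiset of $D$). Then $\Delta_{\mathcal{D}}\mathcal{S}_K=\infty$.
   Context: A normalized distance is a metric $d$ on $\mathcal{X}$ with values in $[0,1]$ and $\sup_{x,y\in\mathcal{X}}d(x,y)=1$. Two databases are (unbounded) neighboring if one is obtained from the other by adding exactly one record. For a deterministic suppression algorithm $\mathcal{S}$ (a map sending each database $D$ to a sub-multiset of $D$), its sensitivity is $\Delta_{\mathcal{D}}\mathcal{S}=\sup_{D,D'\in\mathcal{D}\text{ neighboring}}|\mathcal{S}(D)\,\Delta\,\mathcal{S}(D')|$, where $\Delta$ is multiset symmetric difference. *)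

From HB Require Import structures.
From mathcomp Require Import all_boot all_order all_algebra.
From mathcomp Require Import classical_sets boolp reals ereal.
Set Implicit Arguments. Unset Strict Implicit. Unset Printing Implicit Defensive.
Import Order.TTheory GRing.Theory Num.Theory.
Local Open Scope ring_scope.
Local Open Scope classical_set_scope.

(* Finite multisets over T are represented by sequences up to permutation;
   all notions below are invariant under permutation (perm_eq). *)

Definition normalized_distance (R : realType) (T : eqType) (d : T -> T -> R) :=
  [/\ (forall x y, d x y = 0 <-> x = y),
      (forall x y, d x y = d y x),
      (forall x y z, d x z <= d x y + d y z),
      (forall x y, 0 <= d x y <= 1) &
      sup (range (fun p : T * T => d p.1 p.2)) = 1].

Definition avg (R : realType) (T : eqType) (d : T -> T -> R) (x : T) (D : seq T) : R :=
  (\sum_(z <- D) d x z) / (size D)%:R.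

Definition S_K (R : realType) (T : eqType) (d : T -> T -> R) (K : rat) (D : seq T) : seq T :=
  [seq x <- D | avg d x D <= ratr K].

Definition neighboring (T : eqType) (D D' : seq T) : Prop :=
  (exists x, perm_eq D' (x :: D)) \/ (exists x, perm_eq D (x :: D')).

Definition msymdiff (T : eqType) (s t : seq T) : nat :=
  (\sum_(a <- undup (s ++ t)) ((count_mem a s - count_mem a t) + (count_mem a t - count_mem a s)))%N.

Arguments S_K : clear implicits.
Definition sensitivity (R : realType) (T : eqType) (S : seq T -> seq T) : \bar R :=
  ereal_sup [set e : \bar R | exists D D' : seq T,
    neighboring D D' /\ e = ((msymdiff (S D) (S D'))%:R)%:E].

From HB Require Import structures.
From mathcomp Require Import all_boot all_order all_algebra.
From mathcomp Require Import classical_sets boolp reals ereal.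
From mathcomp Require Import lra.
Import Order.TTheory GRing.Theory Num.Theory.
Local Open Scope ring_scope.

(* Pick records x, y with d(x, y) > K, possible since sup d = 1 > K.  In the
   database D_b made of a copies of x and b copies of y, the record x has
   average distance b d(x,y) / (a + b), which is increasing in b.  Taking b
   largest with this average at most K, all a copies of x survive S_K in D_b
   and none survives in D_(b+1) = y :: D_b, so the two outputs differ by at
   least a records, for every a. *)

Lemma sum_nseq (V : nmodType) (I : Type) (F : I -> V) n a :
  \sum_(i <- nseq n a) F i = F a *+ n.
Proof. by rewrite big_nseq iter_addr_0. Qed.

Lemma count_mem_filter (T : eqType) (p : pred T) (s : seq T) x :
  count_mem x [seq z <- s | p z] = (p x * count_mem x s)%N.
Proof.
case: (boolP (p x)) => px.
  by rewrite mul1n count_filter; apply: eq_count => z /=; case: eqP => // ->; rewrite px.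
by rewrite mul0n; apply/count_memPn; rewrite mem_filter (negbTE px).
Qed.

Lemma count_mem_subn_le_msymdiff {T : eqType} (s t : seq T) x :
  (count_mem x s - count_mem x t <= msymdiff s t)%N.
Proof.
have [xs | /count_memPn -> //] := boolP (x \in s).
rewrite /msymdiff (big_rem x) /= ?mem_undup ?mem_cat ?xs //.
by rewrite -addnA leq_addr.
Qed.

Lemma normalized_distance_gt {R : realType} {T : eqType} {d : T -> T -> R} {k : R} :
  normalized_distance d -> k < 1 -> exists x y, k < d x y.
Proof.
move=> [_ _ _ d01 dsup] k1; set E := (X in sup X) in dsup.
have E_neq0 : (E !=set0)%classic.
  apply/set0P/eqP => E0; move: dsup; rewrite E0 sup0 => /eqP.
  by rewrite eq_sym oner_eq0.
have E_ub : has_ubound E.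
  by exists 1 => _ [p _ <-]; case/andP: (d01 p.1 p.2).
have gap : 0 < 1 - k by rewrite subr_gt0.
have [_ [[x y] _ <-] /=] := sup_adherent gap (conj E_neq0 E_ub).
by rewrite dsup => lt_d; exists x, y; lra.
Qed.

Section TwoPointDatabase.

Context {R : realType} {T : eqType} {d : T -> T -> R} {x y : T}.
Hypothesis dxx : d x x = 0.

Lemma avg_nseq_cat a b :
  avg d x (nseq a x ++ nseq b y) = b%:R * d x y / (a + b)%:R.
Proof.
by rewrite /avg big_cat /= !sum_nseq dxx mul0rn add0r size_cat !size_nseq mulr_natl.
Qed.

Lemma avg_nseq_cat_le a b k : 0 <= k ->
  (avg d x (nseq a x ++ nseq b y) <= k) = (b%:R * (d x y - k) <= k * a%:R).
Proof.
move=> k0; rewrite avg_nseq_cat; have [/eqP|ab_gt0] := posnP (a + b).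
  by rewrite addn_eq0 => /andP[/eqP-> /eqP->]; rewrite !mul0r mulr0 k0 lexx.
by rewrite ler_pdivrMr ?ltr0n // natrD; apply/idP/idP => ?; lra.
Qed.

Hypothesis neq_xy : x != y.

Lemma count_S_K_nseq_cat K a b :
  count_mem x (S_K R T d K (nseq a x ++ nseq b y)) =
  ((avg d x (nseq a x ++ nseq b y) <= ratr K)%R * a)%N.
Proof.
rewrite /S_K count_mem_filter count_cat !count_nseq /= eqxx.
by rewrite eq_sym (negbTE neq_xy) mul1n addn0.
Qed.

Lemma msymdiff_S_K_nseq_cat K a : 0 <= ratr K :> R -> ratr K < d x y ->
  exists b, (a <= msymdiff (S_K R T d K (nseq a x ++ nseq b y))
                          (S_K R T d K (nseq a x ++ nseq b.+1 y)))%N.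
Proof.
set k := ratr K => k0 lt_kd; have gap : 0 < d x y - k by rewrite subr_gt0.
have ratio_ge0 : 0 <= k * a%:R / (d x y - k) by rewrite divr_ge0 ?(ltW gap) // mulr_ge0.
set b := Num.truncn (k * a%:R / (d x y - k)); exists b.
have /andP[] := truncn_itv ratio_ge0; rewrite -/b ler_pdivlMr // ltr_pdivrMr // => b_le b_gt.
have keep_x : avg d x (nseq a x ++ nseq b y) <= k by rewrite avg_nseq_cat_le.
have drop_x : ~~ (avg d x (nseq a x ++ nseq b.+1 y) <= k).
  by rewrite avg_nseq_cat_le // -ltNge.
apply: leq_trans (count_mem_subn_le_msymdiff _ _ x).
by rewrite !count_S_K_nseq_cat keep_x (negbTE drop_x) mul1n mul0n subn0.
Qed.

End TwoPointDatabase.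

Lemma ge_natr_eqy (R : realType) (e : \bar R) :
  (forall n : nat, (n%:R%:E <= e)%E) -> e = +oo%E.
Proof.
case: e => [r | // | ] ge_n; last by have := ge_n 0%N.
have := ge_n (Num.truncn r).+1; rewrite lee_fin => {ge_n} le_r.
by have := real_truncnS_gt (num_real r); rewrite ltNge le_r.
Qed.

Lemma sensitivity_eqy (R : realType) (T : eqType) (S : seq T -> seq T) :
  (forall n, exists D D', neighboring D D' /\ (n <= msymdiff (S D) (S D'))%N) ->
  sensitivity R S = +oo%E.
Proof.
move=> big_diff; apply: ge_natr_eqy => n.
have [D [D' [nDD' le_n]]] := big_diff n.
apply: (@le_trans _ _ (msymdiff (S D) (S D'))%:R%:E); first by rewrite lee_fin ler_nat.
by apply: ereal_sup_ubound; exists D, D'.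
Qed.

Theorem proposition2 (R : realType) (T : eqType) (d : T -> T -> R) (K : rat) :
  (exists x y : T, x != y) ->
  normalized_distance d ->
  0 < K < 1 ->
  sensitivity R (S_K R T d K) = +oo%E.
Proof.
move=> _ dist /andP[K_gt0 K_lt1].
have k_ge0 : 0 <= ratr K :> R by rewrite ler0q ltW.
have k_lt1 : ratr K < 1 :> R by rewrite -(rmorph1 (ratr : rat -> R)) ltr_rat.
have [x [y lt_kd]] := normalized_distance_gt dist k_lt1.
have dxx : d x x = 0 by case: dist => d0 _ _ _ _; apply/d0.
have neq_xy : x != y by apply: contraTneq lt_kd => <-; rewrite dxx -leNgt.
apply: sensitivity_eqy => a.
have [b le_a] := msymdiff_S_K_nseq_cat dxx neq_xy _ a k_ge0 lt_kd.
exists (nseq a x ++ nseq b y), (nseq a x ++ nseq b.+1 y); split => //.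
by left; exists y; rewrite perm_sym -cat1s perm_catCA.
Qed.
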